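(* Let $M=(S,\mathrm{Act},P)$ be an MDP, $T\subseteq S$, $\mathrm{rew}\colon S\to\mathbb{R}_{\ge0}$. Define $\tilde E^{\max}\colon[0,\infty]^S\to[0,\infty]^S$ by $\tilde E^{\max}(x)(s)=E^{\max}(x)(s)$ if $\Pr^{\min}_s(\Diamond T)>0$ and $\tilde E^{\max}(x)(s)=\infty$ if $\Pr^{\min}_s(\Diamond T)=0$. Then for all $s\in S$, $(\mathrm{lfp}\,\tilde E^{\max})(s)=\mathbb{E}^{\max}_s(\Diamond T)$.
   Context: An MDP is a tuple $M=(S,\mathrm{Act},P)$ with $S$ finite, $\mathrm{Act}$ finite, $P\colon S\times\mathrm{Act}\times S\to[0,1]$ with $\sum_{s'}P(s,a,s')\in\{0,1\}$; $\mathrm{Act}(s)=\{a\mid\sum_{s'}P(s,a,s')=1\}$ is nonempty for all $s$; $\mathrm{Post}(s,a)=\{s'\mid P(s,a,s')>0\}$. A strategy is $\sigma\colon S\to\mathrm{Act}$ with $\sigma(s)\in\mathrm{Act}(s)$, inducing a Markov chain with transitions $P(s,\sigma(s),\cdot)$; $\Pr^\sigma_s(\Diamond T)$ is the probability of visiting $T$ from $s$ and $\Pr^{\min}_s(\Diamond T)=\min_\sigma\Pr^\sigma_s(\Diamond T)$. For an infinite path $s_0s_1\ldots$, the accumulated reward is $\sum_{k=0}^{n-1}\mathrm{rew}(s_k)$ with $n=\min\{i\mid s_i\in T\}$ if $T$ is visited, and $\infty$ otherwise; $\mathbb{E}^\sigma_s(\Diamond T)$ is its expectation under $\sigma$ from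 $s$, and $\mathbb{E}^{\max}_s(\Diamond T)=\max_\sigma\mathbb{E}^\sigma_s(\Diamond T)$. $E^{\max}(x)(s)=0$ for $s\in T$ and $\mathrm{rew}(s)+\max_{a\in\mathrm{Act}(s)}\sum_{s'\in\mathrm{Post}(s,a)}P(s,a,s')x(s')$ for $s\notin T$, with $p\cdot\infty=\infty$ for $p>0$, $a+\infty=\infty$. The least fixed point is taken w.r.t. the pointwise order on $[0,\infty]^S$. *)

(* Values in [0,oo] are modelled in \bar R. *)
From HB Require Import structures.
From mathcomp Require Import all_boot all_order all_algebra.
From mathcomp Require Import all_classical all_reals all_analysis.
Set Implicit Arguments.
Unset Strict Implicit.
Unset Printing Implicit Defensive.
Import Order.TTheory GRing.Theory Num.Theory.
Local Open Scope ring_scope.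

Section MDP.
Variables (R : realType) (S A : finType).
Variable P : S -> A -> S -> R.

Definition is_mdp : Prop :=
  [/\ (forall s a s', 0 <= P s a s' <= 1),
      (forall s a, \sum_(s' : S) P s a s' = 0 \/ \sum_(s' : S) P s a s' = 1)
    & (forall s, exists a, \sum_(s' : S) P s a s' = 1)].

Definition Act (s : S) : pred A := [pred a | \sum_(s' : S) P s a s' == 1].
Definition Post (s : S) (a : A) : pred S := [pred s' | 0 < P s a s'].

(* memoryless deterministic strategies sigma : S -> Act with sigma s in Act(s) *)
Definition is_strat (sigma : {ffun S -> A}) : bool := [forall s, sigma s \in Act s].

Variable T : {set S}.
Variable rew : S -> R.

Definition first_hit_path (n : nat) (s : S) (p : {ffun 'I_n.+1 -> S}) : bool :=
  [&& p ord0 == s, p ord_max \in T &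
      [forall i : 'I_n, p (widen_ord (leqnSn n) i) \notin T]].

Definition path_prob (sigma : {ffun S -> A}) (n : nat) (p : {ffun 'I_n.+1 -> S}) : R :=
  \prod_(i < n) P (p (widen_ord (leqnSn n) i)) (sigma (p (widen_ord (leqnSn n) i)))
                  (p (lift ord0 i)).

Definition path_rew (n : nat) (p : {ffun 'I_n.+1 -> S}) : R :=
  \sum_(i < n) rew (p (widen_ord (leqnSn n) i)).

Local Open Scope ereal_scope.

(* Pr^sigma_s(<> T): the event <>T is the disjoint union of the cylinders of the
   first-hit paths, so its probability is the (countable) sum of their probabilities *)
Definition PrReach (sigma : {ffun S -> A}) (s : S) : \bar R :=
  \sum_(n <oo) (\sum_(p : {ffun 'I_n.+1 -> S} | first_hit_path s p)
                  path_prob sigma p)%R%:E.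

(* E^sigma_s(<> T): the accumulated reward is constant (= path_rew p) on the
   cylinder of each first-hit path p and equals +oo on the complement of <>T,
   which has probability 1 - Pr^sigma_s(<>T); with 0 * oo = 0 and p * oo = oo (p>0). *)
Definition ExpRew (sigma : {ffun S -> A}) (s : S) : \bar R :=
  \sum_(n <oo) (\sum_(p : {ffun 'I_n.+1 -> S} | first_hit_path s p)
                  path_prob sigma p * path_rew p)%R%:E
  + (1 - PrReach sigma s) * +oo.

Definition PrMin (s : S) : \bar R :=
  \big[mine/+oo]_(sigma : {ffun S -> A} | is_strat sigma) PrReach sigma s.

Definition EMax (s : S) : \bar R :=
  \big[maxe/-oo]_(sigma : {ffun S -> A} | is_strat sigma) ExpRew sigma s.

Definition Emax_op (x : S -> \bar R) (s : S) : \bar R :=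
  if s \in T then 0
  else (rew s)%:E +
       \big[maxe/-oo]_(a | a \in Act s)
          \sum_(s' | s' \in Post s a) (P s a s')%:E * x s'.

Definition Etilde_op (x : S -> \bar R) (s : S) : \bar R :=
  if 0 < PrMin s then Emax_op x s else +oo.

End MDP.

Definition is_lfp (R : realType) (S : finType) (F : (S -> \bar R) -> (S -> \bar R))
  (x : S -> \bar R) : Prop :=
  [/\ (forall s, (0 <= x s)%E), F x = x &
      forall y : S -> \bar R, (forall s, (0 <= y s)%E) -> F y = y ->
        forall s, (x s <= y s)%E].

(* Splitting the first-hit paths after their first
   step gives Bellman equations for the probability reach sg of visiting T and for
   the expected reward value sg, and value sg s is finite exactly when reach sg s = 1.
   The engine of the proof is a discrete maximum principle: if f is sub-harmonic for
   sg at the points where it attains its maximum m, the level set {f = m} is closed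
   under sg-successors, and a closed set avoiding T is never left, so reach sg = 0
   on it.  It yields two facts.  First, a non-negative fixed point y of ~E^max bounds
   value sg for every sg: on {y < oo} the minimal reach probability is positive, so
   sg reaches T almost surely there, and y is a supersolution.  Second, a strategy
   sgm whose value vector is maximal among the finitely many strategies is a fixed
   point: where Pr^min = 0 its value is +oo (otherwise playing a minimising strategy
   on the zero set of its reach probability would dominate it), and elsewhere it
   satisfies the E^max equation (otherwise a one-state switch would improve it, by
   the comparison principle value_ge_subsolution).  Hence E^max = value sgm is the
   least fixed point. *)

From HB Require Import structures.
From mathcomp Require Import all_boot all_order all_algebra.
From mathcomp Require Import all_classical all_reals all_analysis.
From mathcomp Require Import ring lra.
Import Order.TTheory GRing.Theory Num.Theory.
Set Implicit Arguments.
Unset Strict Implicit.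
Unset Printing Implicit Defensive.
Local Open Scope classical_set_scope.
Local Open Scope ring_scope.

Lemma mean_ge_ub_eq (R : numDomainType) (I : finType) (D : pred I) (w f : I -> R) (m : R) :
  (forall i, D i -> 0 < w i) -> \sum_(i | D i) w i = 1 ->
  (forall i, D i -> f i <= m) -> m <= \sum_(i | D i) w i * f i ->
  forall i, D i -> f i = m.
Proof.
move=> w_gt0 w_sum1 f_le_m m_le_mean.
have gap_ge0 i : D i -> 0 <= w i * (m - f i).
  by move=> Di; rewrite mulr_ge0 ?subr_ge0 ?f_le_m // ltW ?w_gt0.
have gap_sum0 : \sum_(i | D i) w i * (m - f i) = 0.
  apply/eqP; rewrite eq_le sumr_ge0 // andbT.
  under eq_bigr => i _ do rewrite mulrBr.
  by rewrite sumrB -big_distrl /= w_sum1 mul1r subr_le0.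
move=> i Di; have /eqP := psumr_eq0P gap_ge0 gap_sum0 Di.
by rewrite mulf_eq0 subr_eq0 gt_eqF ?w_gt0 //= => /eqP.
Qed.

Lemma exists_maximal (I : finType) (D : pred I) (le : rel I) (i0 : I) :
  reflexive le -> transitive le -> D i0 ->
  exists2 i, D i & forall j, D j -> le i j -> le j i.
Proof.
move=> le_refl' le_trans' Di0.
pose below i := [pred k | D k & le k i].
case: (arg_maxnP (fun i => #|below i|) Di0) => i Di i_max.
exists i => // j Dj le_ij; apply/negPn/negP => not_le_ji.
suff : (#|below i| < #|below j|)%N by apply/negP; rewrite -leqNgt; exact: i_max.
apply: proper_card; apply/properP; split.
  apply/fintype.subsetP => k; rewrite !inE => /andP[Dk le_ki].
  by rewrite Dk (le_trans' _ _ _ le_ki le_ij).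
by exists j; rewrite !inE Dj ?le_refl' // not_le_ji.
Qed.

Section MDP.
Variables (R : realType) (S A : finType) (P : S -> A -> S -> R).
Variables (T : {set S}) (rew : S -> R).
Hypothesis mdpP : is_mdp P.
Hypothesis rew_ge0 : forall s, 0 <= rew s.

Local Notation value := (ExpRew P T rew).

Lemma P_ge0 s a t : 0 <= P s a t.
Proof. by case: mdpP => P01 _ _; case/andP: (P01 s a t). Qed.

Lemma P_eq0 s a t : t \notin Post P s a -> P s a t = 0.
Proof. by rewrite inE -leNgt => P_le0; apply/eqP; rewrite eq_le P_le0 P_ge0. Qed.

Lemma sum_Post s a (F : S -> R) :
  \sum_t P s a t * F t = \sum_(t in Post P s a) P s a t * F t.
Proof.
rewrite [RHS]big_mkcond /=; apply: eq_bigr => t _.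
by case: ifP => // /negbT/P_eq0 ->; rewrite mul0r.
Qed.

Lemma esum_Post s a (F : S -> \bar R) :
  (\sum_t (P s a t)%:E * F t = \sum_(t in Post P s a) (P s a t)%:E * F t)%E.
Proof.
rewrite [RHS]big_mkcond /=; apply: eq_bigr => t _.
by case: ifP => // /negbT/P_eq0 ->; rewrite mul0e.
Qed.

Lemma sum_Post_Act s a : a \in Act P s -> \sum_(t in Post P s a) P s a t = 1.
Proof.
rewrite inE => /eqP <-; rewrite [LHS]big_mkcond /=; apply: eq_bigr => t _.
by case: ifP => // /negbT/P_eq0 ->.
Qed.

Lemma Post_gt0 s a t : t \in Post P s a -> 0 < P s a t.
Proof. by rewrite inE. Qed.

Lemma Post_mean_ge_ub_eq s a (f : S -> R) (m : R) : a \in Act P s ->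
  (forall t, t \in Post P s a -> f t <= m) ->
  m <= \sum_(t in Post P s a) P s a t * f t ->
  forall t, t \in Post P s a -> f t = m.
Proof. by move=> aA; apply: mean_ge_ub_eq; [apply: Post_gt0 | apply: sum_Post_Act]. Qed.

Lemma esum_Post_eqy s a (x : S -> \bar R) t : (forall u, (0 <= x u)%E) ->
  t \in Post P s a -> x t = +oo%E ->
  (\sum_(u in Post P s a) (P s a u)%:E * x u)%E = +oo%E.
Proof.
move=> x_ge0 st xt; apply/eqP; rewrite esum_eqy => [|u _].
  by apply/existsP; exists t; rewrite st xt gt0_muley ?lte_fin ?Post_gt0.
by rewrite gt_eqF // (lt_le_trans ltNy0) // mule_ge0 ?lee_fin ?P_ge0.
Qed.

Lemma exists_strat : exists sg, is_strat P sg.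
Proof.
case: mdpP => _ _ /choice[f fP].
by exists [ffun s => f s]; apply/forallP => s; rewrite ffunE inE fP.
Qed.

Section Paths.
Variable n : nat.

Definition path_cons (s : S) (p : {ffun 'I_n.+1 -> S}) : {ffun 'I_n.+2 -> S} :=
  [ffun i => if unlift ord0 i is Some j then p j else s].

Definition path_behead (p : {ffun 'I_n.+2 -> S}) : {ffun 'I_n.+1 -> S} :=
  [ffun j => p (lift ord0 j)].

Lemma path_cons0 s p : path_cons s p ord0 = s.
Proof. by rewrite ffunE unlift_none. Qed.

Lemma path_consS s p j : path_cons s p (lift ord0 j) = p j.
Proof. by rewrite ffunE liftK. Qed.

Lemma path_consK s : cancel (path_cons s) path_behead.
Proof. by move=> p; apply/ffunP => j; rewrite ffunE path_consS. Qed.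

Lemma path_beheadK (p : {ffun 'I_n.+2 -> S}) : path_cons (p ord0) (path_behead p) = p.
Proof. by apply/ffunP => i; rewrite ffunE; case: unliftP => [j ->|->]; rewrite ?ffunE. Qed.

Lemma widen_lift0 (j : 'I_n) :
  widen_ord (leqnSn n.+1) (lift ord0 j) = lift ord0 (widen_ord (leqnSn n) j).
Proof. exact: val_inj. Qed.

Lemma widen_ord0 : widen_ord (leqnSn n.+1) ord0 = ord0.
Proof. exact: val_inj. Qed.

Lemma first_hit_path_cons s p :
  first_hit_path T s (path_cons s p) = (s \notin T) && first_hit_path T (p ord0) p.
Proof.
rewrite /first_hit_path path_cons0 (_ : ord_max = lift ord0 ord_max); last exact: val_inj.
rewrite path_consS !eqxx /=.
have -> : [forall i : 'I_n.+1, path_cons s p (widen_ord (leqnSn n.+1) i) \notin T] =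
          (s \notin T) && [forall i : 'I_n, p (widen_ord (leqnSn n) i) \notin T].
  apply/forallP/andP => [notT|[sT /forallP notT] i].
    split; first by have := notT ord0; rewrite widen_ord0 path_cons0.
    by apply/forallP => j; have := notT (lift ord0 j); rewrite widen_lift0 path_consS.
  by case: (unliftP ord0 i) => [j ->|->]; rewrite ?widen_lift0 ?path_consS ?widen_ord0 ?path_cons0.
by case: (s \in T); case: (_ \in T).
Qed.

Lemma path_prob_cons sg s p :
  path_prob P sg (path_cons s p) = P s (sg s) (p ord0) * path_prob P sg p.
Proof.
rewrite /path_prob big_ord_recl widen_ord0 path_cons0 path_consS.
by congr (_ * _); apply: eq_bigr => j _; rewrite widen_lift0 !path_consS.
Qed.

Lemma path_rew_cons s p : path_rew rew (path_cons s p) = rew s + path_rew rew p.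
Proof.
rewrite /path_rew big_ord_recl widen_ord0 path_cons0.
by congr (_ + _); apply: eq_bigr => j _; rewrite widen_lift0 path_consS.
Qed.

Lemma sum_first_hit_pathS sg s (F : {ffun 'I_n.+1 -> S} -> R) :
  \sum_(p : {ffun 'I_n.+2 -> S} | first_hit_path T s p)
     P s (sg s) (p (lift ord0 ord0)) * F (path_behead p) =
  if s \in T then 0 else
  \sum_t P s (sg s) t * \sum_(p | first_hit_path T t p) F p.
Proof.
rewrite (reindex_onto (path_cons s) path_behead); last first.
  by move=> p /andP[/eqP <- _]; rewrite path_beheadK.
under eq_bigl => p do rewrite first_hit_path_cons path_consK eqxx andbT.
case: (boolP (s \in T)) => sT /=; first by rewrite big_pred0.
rewrite (partition_big (fun p : {ffun 'I_n.+1 -> S} => p ord0) predT) //=.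
apply: eq_bigr => t _; rewrite big_distrr /=.
apply: eq_big => [p|p /andP[_ /eqP <-]]; last by rewrite path_consS path_consK.
by rewrite /first_hit_path andbAC; case: eqP => // <-; rewrite eqxx.
Qed.

End Paths.

Lemma first_hit_path0 s (p : {ffun 'I_1 -> S}) :
  first_hit_path T s p = (p == [ffun=> s]) && (s \in T).
Proof.
rewrite /first_hit_path (_ : ord_max = ord0) //; last exact: val_inj.
have -> : [forall i : 'I_0, p (widen_ord (leqnSn 0) i) \notin T] by apply/forallP => -[].
rewrite andbT; apply/andP/andP => [[/eqP p0 sT]|[/eqP -> sT]]; last by rewrite ffunE.
by split; [apply/eqP/ffunP => i; rewrite ffunE (ord1 i) | rewrite -p0].
Qed.

Section Strategy.
Variable sg : {ffun S -> A}.

Fixpoint first_hit_prob (n : nat) (s : S) : R :=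
  if n is n'.+1 then
    if s \in T then 0 else \sum_t P s (sg s) t * first_hit_prob n' t
  else if s \in T then 1 else 0.

Fixpoint first_hit_rew (n : nat) (s : S) : R :=
  if n is n'.+1 then
    if s \in T then 0
    else \sum_t P s (sg s) t * (first_hit_rew n' t + rew s * first_hit_prob n' t)
  else 0.

Lemma sum_first_hit_path_prob n s :
  \sum_(p : {ffun 'I_n.+1 -> S} | first_hit_path T s p) path_prob P sg p =
  first_hit_prob n s.
Proof.
elim: n s => [|n IH] s.
  under eq_bigl => p do rewrite first_hit_path0.
  case: (boolP (s \in T)) => sT /=; last by rewrite (negbTE sT) big_pred0 // => p; rewrite andbF.
  by rewrite sT (big_pred1 [ffun=> s]) ?/path_prob ?big_ord0 // => p; rewrite andbT.
transitivity (\sum_(p : {ffun 'I_n.+2 -> S} | first_hit_path T s p)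
    P s (sg s) (p (lift ord0 ord0)) * path_prob P sg (path_behead p)).
  apply: eq_bigr => p /andP[/eqP p0 _].
  by rewrite -{1}(path_beheadK p) path_prob_cons p0 ffunE.
rewrite sum_first_hit_pathS /=; case: (s \in T) => //.
by apply: eq_bigr => t _; rewrite IH.
Qed.

Lemma sum_first_hit_path_rew n s :
  \sum_(p : {ffun 'I_n.+1 -> S} | first_hit_path T s p)
     path_prob P sg p * path_rew rew p = first_hit_rew n s.
Proof.
elim: n s => [|n IH] s.
  by rewrite big1 // => p _; rewrite /path_rew big_ord0 mulr0.
transitivity (\sum_(p : {ffun 'I_n.+2 -> S} | first_hit_path T s p)
    P s (sg s) (p (lift ord0 ord0)) *
    (path_prob P sg (path_behead p) * path_rew rew (path_behead p) +
     rew s * path_prob P sg (path_behead p))).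
  apply: eq_bigr => p /andP[/eqP p0 _].
  rewrite -{1 2}(path_beheadK p) path_prob_cons path_rew_cons p0 ffunE; ring.
rewrite (sum_first_hit_pathS _ _ (fun p =>
  path_prob P sg p * path_rew rew p + rew s * path_prob P sg p)) /=.
case: (s \in T) => //; apply: eq_bigr => t _.
by rewrite big_split /= -big_distrr /= IH sum_first_hit_path_prob.
Qed.

Hypothesis sgP : is_strat P sg.

Lemma strat_Act s : sg s \in Act P s.
Proof. exact: forallP sgP s. Qed.

Lemma sum_strat s : \sum_t P s (sg s) t = 1.
Proof. by have := strat_Act s; rewrite inE => /eqP. Qed.

Lemma first_hit_prob_ge0 n s : 0 <= first_hit_prob n s.
Proof.
elim: n s => [|n IH] s /=; first by case: (s \in T).
by case: (s \in T) => //; apply: sumr_ge0 => t _; rewrite mulr_ge0 ?P_ge0.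
Qed.

Lemma first_hit_rew_ge0 n s : 0 <= first_hit_rew n s.
Proof.
elim: n s => [|n IH] s //=; case: (s \in T) => //; apply: sumr_ge0 => t _.
by rewrite mulr_ge0 ?P_ge0 ?addr_ge0 ?mulr_ge0 ?first_hit_prob_ge0.
Qed.

Definition reach_within n s := \sum_(k < n) first_hit_prob k s.
Definition rew_within n s := \sum_(k < n) first_hit_rew k s.

Lemma reach_within0 s : reach_within 0 s = 0.
Proof. by rewrite /reach_within big_ord0. Qed.

Lemma rew_within0 s : rew_within 0 s = 0.
Proof. by rewrite /rew_within big_ord0. Qed.

Lemma reach_withinS n s : reach_within n.+1 s =
  if s \in T then 1 else \sum_t P s (sg s) t * reach_within n t.
Proof.
rewrite /reach_within big_ord_recl /=; case: (s \in T); first by rewrite big1 ?addr0.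
by rewrite add0r exchange_big /=; apply: eq_bigr => t _; rewrite big_distrr.
Qed.

Lemma rew_withinS n s : rew_within n.+1 s =
  if s \in T then 0
  else \sum_t P s (sg s) t * (rew_within n t + rew s * reach_within n t).
Proof.
rewrite /rew_within big_ord_recl /=; case: (s \in T); first by rewrite big1 ?addr0.
rewrite add0r exchange_big /=; apply: eq_bigr => t _.
by rewrite -big_distrr /= /reach_within [rew s * _]big_distrr -big_split.
Qed.

Lemma reach_within_ge0 n s : 0 <= reach_within n s.
Proof. by apply: sumr_ge0 => k _; apply: first_hit_prob_ge0. Qed.

Lemma rew_within_ge0 n s : 0 <= rew_within n s.
Proof. by apply: sumr_ge0 => k _; apply: first_hit_rew_ge0. Qed.

Lemma reach_within_le1 n s : reach_within n s <= 1.
Proof.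
elim: n s => [|n IH] s; first by rewrite reach_within0.
rewrite reach_withinS; case: (s \in T) => //.
by rewrite -(sum_strat s); apply: ler_sum => t _; rewrite ler_piMr ?P_ge0.
Qed.

Lemma reach_within_homo s : {homo reach_within^~ s : n m / (n <= m)%N >-> n <= m}.
Proof.
move=> n m le_nm; rewrite /reach_within -(subnKC le_nm) big_split_ord /= lerDl.
by apply: sumr_ge0 => k _; apply: first_hit_prob_ge0.
Qed.

Lemma rew_within_homo s : {homo rew_within^~ s : n m / (n <= m)%N >-> n <= m}.
Proof.
move=> n m le_nm; rewrite /rew_within -(subnKC le_nm) big_split_ord /= lerDl.
by apply: sumr_ge0 => k _; apply: first_hit_rew_ge0.
Qed.

Local Open Scope ereal_scope.

Definition reach_sup s : \bar R := ereal_sup (range (fun n => (reach_within n s)%:E)).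
Definition rew_sup s : \bar R := ereal_sup (range (fun n => (rew_within n s)%:E)).

Lemma cvg_reach_within s : (reach_within n s)%:E @[n --> \oo] --> reach_sup s.
Proof. by apply: ereal_nondecreasing_cvgn => n m le_nm; rewrite lee_fin reach_within_homo. Qed.

Lemma cvg_rew_within s : (rew_within n s)%:E @[n --> \oo] --> rew_sup s.
Proof. by apply: ereal_nondecreasing_cvgn => n m le_nm; rewrite lee_fin rew_within_homo. Qed.

Lemma PrReach_sup s : PrReach P T sg s = reach_sup s.
Proof.
rewrite /PrReach (eq_eseriesr (g := fun n => (first_hit_prob n s)%:E)); last first.
  by move=> n _; rewrite sum_first_hit_path_prob.
apply: cvg_lim => //; under eq_fun => n do rewrite sumEFin big_mkord.
exact: cvg_reach_within.
Qed.

Lemma ExpRew_sup s : value sg s = rew_sup s + (1 - reach_sup s) * +oo.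
Proof.
rewrite /ExpRew PrReach_sup (eq_eseriesr (g := fun n => (first_hit_rew n s)%:E)); last first.
  by move=> n _; rewrite sum_first_hit_path_rew.
congr (_ + _); apply: cvg_lim => //; under eq_fun => n do rewrite sumEFin big_mkord.
exact: cvg_rew_within.
Qed.

Lemma reach_within_le_sup n s : (reach_within n s)%:E <= reach_sup s.
Proof. by apply: ereal_sup_ubound; exists n. Qed.

Lemma rew_sup_ge0 s : 0 <= rew_sup s.
Proof.
by apply: le_trans (ereal_sup_ubound _); [|exists 0%N]; rewrite // rew_within0.
Qed.

Lemma reach_sup_fin_num s : reach_sup s \is a fin_num.
Proof.
rewrite ge0_fin_numE; last first.
  by apply: le_trans (reach_within_le_sup 0 s); rewrite lee_fin reach_within_ge0.
apply: le_lt_trans (ltry 1); apply: ge_ereal_sup => _ [n _ <-].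
by rewrite lee_fin reach_within_le1.
Qed.

Local Close Scope ereal_scope.

Definition reach s : R := fine (reach_sup s).

Lemma reach_supE s : reach_sup s = (reach s)%:E.
Proof. by rewrite fineK ?reach_sup_fin_num. Qed.

Lemma PrReachE s : PrReach P T sg s = (reach s)%:E.
Proof. by rewrite PrReach_sup reach_supE. Qed.

Lemma reach_ge0 s : 0 <= reach s.
Proof.
rewrite -lee_fin -reach_supE (le_trans _ (reach_within_le_sup 0 _)) //.
by rewrite lee_fin reach_within_ge0.
Qed.

Lemma reach_le1 s : reach s <= 1.
Proof.
rewrite -lee_fin -reach_supE; apply: ge_ereal_sup => _ [n _ <-].
by rewrite lee_fin reach_within_le1.
Qed.

Lemma reach_rec s :
  reach s = if s \in T then 1 else \sum_t P s (sg s) t * reach t.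
Proof.
apply/EFin_inj; rewrite -reach_supE.
have shifted : (reach_within n.+1 s)%:E @[n --> \oo] --> reach_sup s.
  by rewrite (cvg_shiftS (fun n => (reach_within n s)%:E)); apply: cvg_reach_within.
suff : (reach_within n.+1 s)%:E @[n --> \oo] -->
       (if s \in T then 1 else \sum_t P s (sg s) t * reach t)%:E.
  exact: cvg_unique _ shifted.
case: (boolP (s \in T)) => sT.
  by under eq_fun => n do rewrite reach_withinS sT; apply: cvg_cst.
under eq_fun => n do rewrite reach_withinS (negbTE sT) -sumEFin.
rewrite -sumEFin; apply: cvg_nnesum => t _.
  by near=> n; rewrite lee_fin mulr_ge0 ?P_ge0 ?reach_within_ge0.
under eq_fun => n do rewrite EFinM.
by rewrite EFinM -reach_supE; apply: cvgeZl => //; apply: cvg_reach_within.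
Unshelve. all: by end_near.
Qed.

Lemma reach_T s : s \in T -> reach s = 1.
Proof. by move=> sT; rewrite reach_rec sT. Qed.

Lemma reach_Post s : s \notin T ->
  reach s = \sum_(t in Post P s (sg s)) P s (sg s) t * reach t.
Proof. by move=> sT; rewrite reach_rec (negbTE sT) sum_Post. Qed.

Lemma reach_Post_eq1 s t : s \notin T -> reach s = 1 -> t \in Post P s (sg s) ->
  reach t = 1.
Proof.
move=> sT reach1 st; apply: (Post_mean_ge_ub_eq (strat_Act s)) st => [u _|].
  exact: reach_le1.
by rewrite -reach_Post // reach1.
Qed.

Lemma reach_Post_eq0 s t : s \notin T -> reach s = 0 -> t \in Post P s (sg s) ->
  reach t = 0.
Proof.
move=> sT; rewrite reach_Post // => /psumr_eq0P sum0 st.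
have /eqP := sum0 (fun u _ => mulr_ge0 (P_ge0 _ _ _) (reach_ge0 u)) t st.
by rewrite mulf_eq0 gt_eqF ?Post_gt0 //= => /eqP.
Qed.

Lemma reach_Post_lt1 s : s \notin T -> reach s < 1 ->
  exists2 t, t \in Post P s (sg s) & reach t < 1.
Proof.
move=> sT lt1.
have /existsP[t /andP[st lt1t]] : [exists t, (t \in Post P s (sg s)) && (reach t < 1)].
  apply: contraLR lt1 => /existsPn all1; rewrite -leNgt reach_Post //.
  rewrite -{1}(sum_Post_Act (strat_Act s)); apply: ler_sum => t st.
  have := all1 t; rewrite st /= -leNgt => ge1.
  suff -> : reach t = 1 by rewrite mulr1.
  by apply/le_anti; rewrite reach_le1.
by exists t.
Qed.

Lemma closed_reach0 (M : pred S) :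
  (forall t, M t -> t \notin T) ->
  (forall t u, M t -> u \in Post P t (sg t) -> M u) ->
  forall t, M t -> reach t = 0.
Proof.
move=> MT M_closed.
have hit0 n t : M t -> first_hit_prob n t = 0.
  elim: n t => [|n IH] t Mt /=; rewrite (negbTE (MT t Mt)) // sum_Post big1 // => u tu.
  by rewrite IH ?mulr0 // (M_closed t).
move=> t Mt; apply/eqP; rewrite eq_le reach_ge0 andbT -lee_fin -reach_supE.
apply: ge_ereal_sup => _ [n _ <-]; rewrite lee_fin /reach_within big1 // => k _.
by rewrite hit0.
Qed.

Lemma max_principle (D : pred S) (f : S -> R) (m : R) :
  (forall x, D x -> f x = m -> x \notin T) ->
  (forall x y, D x -> f x = m -> y \in Post P x (sg x) -> f y <= m) ->
  (forall x y, D x -> f x = m -> y \in Post P x (sg x) -> f y = m -> D y) ->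
  (forall x, D x -> f x = m -> m <= \sum_(y in Post P x (sg x)) P x (sg x) y * f y) ->
  forall x, D x -> f x = m -> reach x = 0.
Proof.
move=> notT le_m D_closed submean x Dx fx.
apply: (@closed_reach0 [pred x | D x && (f x == m)]); last by rewrite inE Dx fx eqxx.
  by move=> t /andP[Dt /eqP]; apply: notT.
move=> t u /andP[Dt /eqP ft] tu.
have fu : f u = m.
  by apply: (Post_mean_ge_ub_eq (strat_Act t)) (submean t Dt ft) u tu => v; apply: le_m.
by rewrite inE fu eqxx (D_closed t u).
Qed.

Lemma min_principle (D : pred S) (f : S -> R) (m : R) :
  (forall x, D x -> f x = m -> x \notin T) ->
  (forall x y, D x -> f x = m -> y \in Post P x (sg x) -> m <= f y) ->
  (forall x y, D x -> f x = m -> y \in Post P x (sg x) -> f y = m -> D y) ->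
  (forall x, D x -> f x = m -> \sum_(y in Post P x (sg x)) P x (sg x) y * f y <= m) ->
  forall x, D x -> f x = m -> reach x = 0.
Proof.
move=> notT ge_m D_closed supermean x Dx fx.
apply: (@max_principle D (fun x => - f x) (- m) _ _ _ _ x Dx); last by rewrite fx.
- by move=> y Dy /= /oppr_inj; apply: notT.
- by move=> y z Dy /= /oppr_inj fy yz; rewrite lerN2; apply: ge_m yz.
- by move=> y z Dy /= /oppr_inj fy yz /oppr_inj; apply: D_closed Dy fy yz.
move=> y Dy /= /oppr_inj fy; under eq_bigr do rewrite mulrN.
by rewrite sumrN lerN2; apply: supermean.
Qed.

Definition trans_op (x : S -> R) (t : S) : R :=
  if t \in T then 0 else \sum_u P t (sg t) u * x u.

Lemma trans_op_le x y : (forall t, x t <= y t) -> forall t, trans_op x t <= trans_op y t.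
Proof.
move=> le_xy t; rewrite /trans_op; case: (t \in T) => //.
by apply: ler_sum => u _; apply: ler_wpM2l; rewrite ?P_ge0.
Qed.

Lemma iter_trans_op_le_on (G : pred S) j x y :
  (forall t u, G t -> t \notin T -> u \in Post P t (sg t) -> G u) ->
  (forall t, G t -> x t <= y t) ->
  forall t, G t -> iter j trans_op x t <= iter j trans_op y t.
Proof.
move=> G_closed le_xy; elim: j => [//|j IH] t Gt /=.
rewrite /trans_op; case: (boolP (t \in T)) => // tT.
rewrite !(sum_Post t (sg t)); apply: ler_sum => u tu.
by apply: ler_wpM2l; rewrite ?P_ge0 // IH // (G_closed t).
Qed.

Lemma trans_op_addc c x t :
  0 <= c -> trans_op (fun u => c + x u) t <= c + trans_op x t.
Proof.
move=> c_ge0; rewrite /trans_op; case: (t \in T); first by rewrite addr0.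
by under eq_bigr do rewrite mulrDr; rewrite big_split /= -big_distrl /= sum_strat mul1r.
Qed.

Lemma iter_trans_opZ j c x t :
  iter j trans_op (fun u => c * x u) t = c * iter j trans_op x t.
Proof.
elim: j t => [//|j IH] t /=; rewrite (funext IH) /trans_op.
case: (t \in T); first by rewrite mulr0.
by rewrite big_distrr /=; apply: eq_bigr => u _; rewrite mulrCA.
Qed.

Lemma iter_trans_op1 n t : iter n trans_op (fun _ => 1) t = 1 - reach_within n t.
Proof.
elim: n t => [|n IH] t /=; first by rewrite reach_within0 subr0.
rewrite (funext IH) reach_withinS /trans_op; case: (t \in T); first by rewrite subrr.
by rewrite -[in RHS](sum_strat t) -sumrB; apply: eq_bigr => u _; rewrite mulrBr mulr1.
Qed.

Definition rew_bound : R := \sum_t rew t.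

Lemma rew_le_bound t : rew t <= rew_bound.
Proof. by rewrite /rew_bound (bigD1 t) //= lerDl sumr_ge0. Qed.

Lemma rew_bound_ge0 : 0 <= rew_bound.
Proof. exact: sumr_ge0. Qed.

Lemma rew_withinS_le n t : rew_within n.+1 t <= rew t + trans_op (rew_within n) t.
Proof.
rewrite rew_withinS /trans_op; case: (t \in T); first by rewrite addr0.
under eq_bigr do rewrite mulrDr; rewrite big_split /= addrC lerD2r.
rewrite -[leRHS]mulr1 -(sum_strat t) big_distrr /=.
apply: ler_sum => u _; rewrite mulrCA; apply: ler_wpM2l; rewrite ?P_ge0 //.
by rewrite ler_piMr ?P_ge0 ?reach_within_le1.
Qed.

Lemma rew_within_addn n j t :
  rew_within (n + j) t <= j%:R * rew_bound + iter j trans_op (rew_within n) t.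
Proof.
elim: j t => [|j IH] t; first by rewrite addn0 mul0r add0r.
rewrite addnS /=; apply: le_trans (rew_withinS_le _ _) _.
have c_ge0 : 0 <= j%:R * rew_bound by rewrite mulr_ge0 ?ler0n ?rew_bound_ge0.
have := trans_op_le IH t; have := trans_op_addc (iter j trans_op (rew_within n)) t c_ge0.
by rewrite mulrSr; have := rew_le_bound t; lra.
Qed.

Lemma uniform_reach_within (G : pred S) : (forall t, G t -> reach t = 1) ->
  exists N, forall t, G t -> 1 / 2 < reach_within N.+1 t.
Proof.
move=> G_reach1.
have /choice[Nt Nt_half] : forall t, exists n, G t -> 1 / 2 < reach_within n t.
  move=> t; case: (boolP (G t)) => [/G_reach1 reach_t|]; last by exists 0%N.
  have : ((1 / 2)%:E < reach_sup t)%E by rewrite reach_supE reach_t lte_fin; lra.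
  by move/ereal_sup_gt => [_ [n _ <-]]; rewrite lte_fin; exists n.
exists (\max_t Nt t)%N => t Gt; apply: lt_le_trans (Nt_half t Gt) _.
by apply/reach_within_homo/leqW/leq_bigmax.
Qed.

(* From every state of G, T is reached within N.+1 steps with probability > 1/2, so a
   block of N.+1 steps adds at most N.+1 * rew_bound while the rest is weighted by less
   than 1/2: the bound C = 2 * N.+1 * rew_bound is preserved. *)
Lemma rew_sup_lt_oo s : reach s = 1 -> (rew_sup s < +oo)%E.
Proof.
move=> reach1; pose G t := reach t == 1.
have G_closed t u : G t -> t \notin T -> u \in Post P t (sg t) -> G u.
  by rewrite /G => /eqP reach_t tT tu; rewrite (reach_Post_eq1 tT reach_t tu).
have [N N_half] := @uniform_reach_within G (fun t Gt => eqP Gt).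

pose C := 2 * N.+1%:R * rew_bound.
have C_ge0 : 0 <= C by rewrite !mulr_ge0 ?ler0n ?rew_bound_ge0.
have bound k t : G t -> rew_within (k * N.+1) t <= C.
  elim: k t => [|k IH] t Gt; first by rewrite mul0n rew_within0.
  rewrite mulSn addnC; apply: le_trans (rew_within_addn _ _ _) _.
  have : iter N.+1 trans_op (rew_within (k * N.+1)) t <= C * (1 - reach_within N.+1 t).
    rewrite -iter_trans_op1 -iter_trans_opZ.
    by apply: (iter_trans_op_le_on _ G_closed) Gt => u Gu; rewrite mulr1 IH.
  have : C * (1 - reach_within N.+1 t) <= C * (1 / 2).
    by apply: ler_wpM2l => //; have := N_half t Gt; lra.
  have : N.+1%:R * rew_bound = C / 2 by rewrite /C; field.
  lra.
apply: le_lt_trans (ltry C); apply: ge_ereal_sup => _ [n _ <-].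
rewrite lee_fin; apply: le_trans (bound n s _); last by rewrite /G reach1.
by apply: rew_within_homo; rewrite leq_pmulr.
Qed.

Local Open Scope ereal_scope.

Lemma rew_sup_rec s : s \notin T ->
  rew_sup s = \sum_t (P s (sg s) t)%:E * (rew_sup t + (rew s * reach t)%:E).
Proof.
move=> sT.
have shifted : (rew_within n.+1 s)%:E @[n --> \oo] --> rew_sup s.
  by rewrite (cvg_shiftS (fun n => (rew_within n s)%:E)); apply: cvg_rew_within.
suff : (rew_within n.+1 s)%:E @[n --> \oo] -->
       \sum_t (P s (sg s) t)%:E * (rew_sup t + (rew s * reach t)%:E).
  exact: cvg_unique _ shifted.
under eq_fun => n do rewrite rew_withinS (negbTE sT) -sumEFin.
apply: cvg_nnesum => t _.
  near=> n; rewrite lee_fin mulr_ge0 ?P_ge0 //.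
  by rewrite addr_ge0 ?mulr_ge0 ?rew_within_ge0 ?reach_within_ge0.
under eq_fun => n do rewrite EFinM EFinD.
apply: cvgeZl => //; apply: cvgeD.
- by apply: ge0_adde_def; rewrite inE ?rew_sup_ge0 // lee_fin mulr_ge0 ?reach_ge0.
- exact: cvg_rew_within.
- under eq_fun => n do rewrite EFinM.
  by rewrite EFinM; apply: cvgeZl => //; rewrite -reach_supE; apply: cvg_reach_within.
Unshelve. all: by end_near.
Qed.

Lemma rew_sup_T s : s \in T -> rew_sup s = 0.
Proof.
move=> sT; apply/eqP; rewrite eq_le rew_sup_ge0 andbT.
by apply: ge_ereal_sup => _ [[|n] _ <-]; rewrite ?rew_within0 ?rew_withinS ?sT.
Qed.

Lemma value_reach_lt1 s : (reach s < 1)%R -> value sg s = +oo.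
Proof.
move=> lt1; rewrite ExpRew_sup reach_supE -EFinB gt0_muley ?lte_fin ?subr_gt0 //.
by rewrite addey // gt_eqF // (lt_le_trans ltNy0 (rew_sup_ge0 s)).
Qed.

Lemma value_reach1 s : reach s = 1%R -> value sg s = rew_sup s.
Proof. by move=> reach1; rewrite ExpRew_sup reach_supE reach1 subee // mul0e adde0. Qed.

Lemma value_ge0 s : 0 <= value sg s.
Proof.
case: (ltP (reach s) 1%R) => [/value_reach_lt1 -> //|ge1].
by rewrite value_reach1 ?rew_sup_ge0 //; apply/le_anti; rewrite reach_le1.
Qed.

Lemma value_T s : s \in T -> value sg s = 0.
Proof. by move=> sT; rewrite value_reach1 ?reach_T // rew_sup_T. Qed.

Lemma value_lt_oo_reach1 s : value sg s < +oo -> reach s = 1%R.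
Proof.
case: (ltP (reach s) 1%R) => [/value_reach_lt1 -> //|ge1 _].
by apply/le_anti; rewrite reach_le1.
Qed.

Lemma value_step s : s \notin T ->
  value sg s = (rew s)%:E +
    \sum_(t in Post P s (sg s)) (P s (sg s) t)%:E * value sg t.
Proof.
move=> sT; case: (ltP (reach s) 1%R) => [lt1|ge1].
  have [t st /value_reach_lt1 tval] := reach_Post_lt1 sT lt1.
  by rewrite value_reach_lt1 // (esum_Post_eqy _ st tval) ?addey // => u; apply: value_ge0.
have reach1 : reach s = 1%R by apply/le_anti; rewrite reach_le1.
rewrite value_reach1 // rew_sup_rec // esum_Post.
transitivity (\sum_(t in Post P s (sg s))
  ((P s (sg s) t)%:E * value sg t + (P s (sg s) t * rew s)%:E)).
  apply: eq_bigr => t st; rewrite (reach_Post_eq1 sT reach1 st) mulr1.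
  rewrite value_reach1 ?(reach_Post_eq1 sT reach1 st) // muleDr ?EFinM //.
  by apply: ge0_adde_def; rewrite inE ?rew_sup_ge0 ?lee_fin.
by rewrite big_split /= addeC sumEFin -big_distrl /= sum_Post_Act ?strat_Act // mul1r.
Qed.

Lemma value_Post_lt_oo s t : s \notin T -> value sg s < +oo ->
  t \in Post P s (sg s) -> value sg t < +oo.
Proof.
move=> sT s_fin st; rewrite ltey; apply: contraTneq s_fin => t_oo.
by rewrite value_step // (esum_Post_eqy _ st t_oo) ?addey // => u; apply: value_ge0.
Qed.

Lemma value_lt_ooE s : (value sg s < +oo) = (reach s == 1%R).
Proof.
apply/idP/eqP => [/value_lt_oo_reach1 //|reach1].
by rewrite value_reach1 // rew_sup_lt_oo.
Qed.

Lemma subsolution_gap_submean (x : S -> \bar R) u :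
  (forall t, value sg t < +oo -> x t \is a fin_num) ->
  u \notin T -> value sg u < +oo ->
  x u <= (rew u)%:E + \sum_(v in Post P u (sg u)) (P u (sg u) v)%:E * x v ->
  (fine (x u) - fine (value sg u) <=
   \sum_(v in Post P u (sg u)) P u (sg u) v * (fine (x v) - fine (value sg v)))%R.
Proof.
move=> x_fin uT u_fin x_sub.
have fin_Post v : v \in Post P u (sg u) -> value sg v < +oo by apply: value_Post_lt_oo.
have value_u : fine (value sg u) =
    (rew u + \sum_(v in Post P u (sg u)) P u (sg u) v * fine (value sg v))%R.
  apply: EFin_inj; rewrite fineK ?ge0_fin_numE ?value_ge0 // value_step //.
  rewrite EFinD -sumEFin; congr (_ + _); apply: eq_bigr => v uv.
  by rewrite EFinM fineK // ge0_fin_numE ?value_ge0 //; apply: fin_Post.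
have x_u : (fine (x u) <= rew u + \sum_(v in Post P u (sg u)) P u (sg u) v * fine (x v))%R.
  rewrite -lee_fin fineK ?x_fin // EFinD -sumEFin; apply: le_trans x_sub _.
  rewrite leeD2l //; apply: lee_sum => v uv.
  by rewrite EFinM fineK //; apply/x_fin/fin_Post.
rewrite value_u [leRHS](eq_bigr (fun v =>
  P u (sg u) v * fine (x v) - P u (sg u) v * fine (value sg v))%R); last first.
  by move=> v _; rewrite mulrBr.
by rewrite sumrB; lra.
Qed.

Lemma value_ge_subsolution (x : S -> \bar R) :
  (forall t, t \in T -> x t <= 0) ->
  (forall t, value sg t < +oo -> x t \is a fin_num) ->
  (forall t, t \notin T -> value sg t < +oo ->
     x t <= (rew t)%:E + \sum_(u in Post P t (sg t)) (P t (sg t) u)%:E * x u) ->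
  forall t, x t <= value sg t.
Proof.
move=> x_T x_fin x_sub t.
have [t_fin|] := ltP (value sg t) +oo; last by move=> oo_le; apply: le_trans oo_le; rewrite leey.
pose F u := value sg u < +oo.
pose d u := (fine (x u) - fine (value sg u))%R.
have [u0 Fu0 d_max] := arg_maxP d (t_fin : F t).
rewrite leNgt; apply/negP => lt_xt.
have d_pos : (0 < d u0)%R.
  apply: lt_le_trans (d_max t t_fin); rewrite subr_gt0 -lte_fin.
  by rewrite !fineK ?x_fin // ge0_fin_numE ?value_ge0.
have F_notT u : F u -> d u = d u0 -> u \notin T.
  move=> Fu du; apply: contraTN d_pos => uT; rewrite -du -leNgt /d value_T //= subr0.
  by rewrite -lee_fin fineK ?x_T ?x_fin.
have : reach u0 = 0%R.
  apply: (@max_principle F d (d u0)) => // [u v Fu du uv|u v Fu du uv _|u Fu du].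
  - by apply/d_max/(value_Post_lt_oo _ Fu uv)/F_notT.
  - by apply: (value_Post_lt_oo _ Fu uv); apply: F_notT.
  - by rewrite -du; apply: (subsolution_gap_submean x_fin) (x_sub u _ Fu) => //; apply: F_notT.
by move: Fu0; rewrite /F value_lt_ooE => /eqP ->; apply/eqP; rewrite oner_eq0.
Qed.

End Strategy.

Local Open Scope ereal_scope.

Lemma value_local (sg1 sg2 : {ffun S -> A}) (H : pred S) :
  (forall t, H t -> sg1 t = sg2 t) ->
  (forall t u, H t -> t \notin T -> u \in Post P t (sg2 t) -> H u) ->
  forall t, H t -> value sg1 t = value sg2 t.
Proof.
move=> agree H_closed.
have hit_eq n t : H t ->
    first_hit_prob sg1 n t = first_hit_prob sg2 n t /\
    first_hit_rew sg1 n t = first_hit_rew sg2 n t.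
  elim: n t => [//|n IH] t Ht /=; case: (boolP (t \in T)) => // tT.
  rewrite agree // !(sum_Post t (sg2 t)); split; apply: eq_bigr => u tu.
    by case: (IH u (H_closed t u Ht tT tu)) => ->.
  by case: (IH u (H_closed t u Ht tT tu)) => -> ->.
move=> t Ht; rewrite !ExpRew_sup /reach_sup /rew_sup.
have within_eq n : reach_within sg1 n t = reach_within sg2 n t /\
                   rew_within sg1 n t = rew_within sg2 n t.
  by split; apply: eq_bigr => k _; case: (hit_eq k t Ht).
have -> : (fun n => (reach_within sg1 n t)%:E) = (fun n => (reach_within sg2 n t)%:E).
  by apply/funext => n; case: (within_eq n) => ->.
have -> : (fun n => (rew_within sg1 n t)%:E) = (fun n => (rew_within sg2 n t)%:E).
  by apply/funext => n; case: (within_eq n) => _ ->.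
by [].
Qed.

Lemma reach_lt1_switch (sg sg' : {ffun S -> A}) : is_strat P sg -> is_strat P sg' ->
  (forall t, (reach sg t < 1)%R -> sg' t = sg t) ->
  forall t, (reach sg t < 1)%R -> (reach sg' t < 1)%R.
Proof.
move=> sgP sg'P agree t lt1; rewrite ltNge; apply/negP => ge1.
pose D x := (reach sg x < 1)%R && (reach sg' x == 1%R).
have Dt : D t by rewrite /D lt1 eq_le reach_le1.
have [x0 Dx0 x0_min] := arg_minP (reach sg) Dt.
have D_notT x : D x -> x \notin T.
  by case/andP=> lt1x _; apply: contraTN lt1x => xT; rewrite reach_T // ltxx.
have D_Post x y : D x -> y \in Post P x (sg' x) ->
    y \in Post P x (sg x) /\ reach sg' y = 1%R.
  move=> Dx xy; case/andP: (Dx) => lt1x /eqP reach1'.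
  by rewrite -agree //; split; last by apply: reach_Post_eq1 (D_notT x Dx) reach1' xy.
suff : reach sg' x0 = 0%R.
  by case/andP: Dx0 => _ /eqP ->; apply/eqP; rewrite oner_eq0.
apply: (@min_principle _ sg'P D (reach sg) (reach sg x0) _ _ _ _ x0 Dx0 erefl).
- by move=> x Dx _; apply: D_notT.
- move=> x y Dx _ xy; have [_ reach1'] := D_Post x y Dx xy.
  have [lt1y|] := ltP (reach sg y) 1%R; first by apply: x0_min; rewrite /D lt1y reach1' eqxx.
  by apply: le_trans; apply: ltW; case/andP: Dx0.
- move=> x y Dx _ xy fy; have [_ reach1'] := D_Post x y Dx xy.
  by rewrite /D fy reach1' eqxx andbT; case/andP: Dx0.
move=> x Dx fx; case/andP: (Dx) => lt1x _.
by rewrite agree // -reach_Post ?fx // D_notT.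
Qed.

Lemma PrMin_le_reach sg s : is_strat P sg -> PrMin P T s <= (reach sg s)%:E.
Proof. by move=> sgP; rewrite -PrReachE //; apply: bigmin_le_cond. Qed.

Lemma exists_PrMin_strat s :
  exists2 sg, is_strat P sg & PrMin P T s = (reach sg s)%:E.
Proof.
have [sg0 sg0P] := exists_strat.
have [sg sgP sg_min] := arg_minP (fun sg => PrReach P T sg s) sg0P.
exists sg => //; apply/le_anti; rewrite PrMin_le_reach //= -PrReachE //.
by apply: le_bigmin => [|sg' /sg_min]; rewrite ?leey.
Qed.

Lemma reach1_on_PrMin_gt0 sg (F : pred S) : is_strat P sg ->
  (forall t, F t -> 0 < PrMin P T t) ->
  (forall t u, F t -> t \notin T -> u \in Post P t (sg t) -> F u) ->
  forall t, F t -> reach sg t = 1%R.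
Proof.
move=> sgP F_PrMin F_closed t Ft.
have [lt1|] := ltP (reach sg t) 1%R; last by move=> ge1; apply/le_anti; rewrite reach_le1.
exfalso.
pose D x := F x && (reach sg x < 1)%R.
have Dt : D t by rewrite /D Ft lt1.
have [x0 /andP[Fx0 lt1x0] x0_min] := arg_minP (reach sg) Dt.
have F_notT x : F x -> reach sg x = reach sg x0 -> x \notin T.
  by move=> _ fx; apply: contraTN lt1x0 => xT; rewrite -fx reach_T // ltxx.
suff : reach sg x0 = 0%R.
  move=> reach0; have := lt_le_trans (F_PrMin x0 Fx0) (PrMin_le_reach x0 sgP).
  by rewrite reach0 ltxx.
apply: (@min_principle _ sgP F (reach sg) (reach sg x0) F_notT _ _ _ x0 Fx0 erefl).
- move=> x y Fx fx xy; have Fy := F_closed x y Fx (F_notT x Fx fx) xy.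
  have [lt1y|] := ltP (reach sg y) 1%R; first by apply: x0_min; rewrite /D Fy lt1y.
  exact/le_trans/ltW.
- by move=> x y Fx fx xy _; apply: F_closed xy => //; apply: F_notT.
by move=> x Fx fx; rewrite -reach_Post ?fx // F_notT.
Qed.

Lemma value_le_supersolution sg (y : S -> \bar R) : is_strat P sg ->
  (forall t, 0 <= y t) -> (forall t, y t < +oo -> reach sg t = 1%R) ->
  (forall t, t \notin T -> y t < +oo ->
     (rew t)%:E + \sum_(u in Post P t (sg t)) (P t (sg t) u)%:E * y u <= y t) ->
  forall t, value sg t <= y t.
Proof.
move=> sgP y_ge0 y_reach1 y_super.
have bound n t : (rew_within sg n t)%:E <= y t.
  elim: n t => [|n IH] t; first by rewrite rew_within0 y_ge0.
  have [t_fin|] := ltP (y t) +oo; last by move=> oo_le; apply: le_trans oo_le; rewrite leey.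
  case: (boolP (t \in T)) => tT; first by rewrite rew_withinS // tT y_ge0.
  apply: le_trans (y_super t tT t_fin).
  apply: (le_trans (y := (rew t + trans_op sg (rew_within sg n) t)%:E)).
    by rewrite lee_fin rew_withinS_le.
  rewrite /trans_op (negbTE tT) sum_Post EFinD leeD2l // -sumEFin.
  by apply: lee_sum => u _; rewrite EFinM lee_wpmul2l ?lee_fin ?P_ge0.
move=> t; have [t_fin|] := ltP (y t) +oo; last by move=> oo_le; apply: le_trans oo_le; rewrite leey.
rewrite value_reach1 ?y_reach1 //; apply: ge_ereal_sup => _ [n _ <-]; exact: bound.
Qed.

Lemma value_le_fixpoint (y : S -> \bar R) :
  (forall t, 0 <= y t) -> Etilde_op P T rew y = y ->
  forall sg, is_strat P sg -> forall t, value sg t <= y t.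
Proof.
move=> y_ge0 y_fix sg sgP.
have y_PrMin t : y t < +oo -> 0 < PrMin P T t.
  by rewrite -y_fix /Etilde_op; case: ifP => // _; rewrite ltxx.
have y_super t : t \notin T -> y t < +oo ->
    (rew t)%:E + \sum_(u in Post P t (sg t)) (P t (sg t) u)%:E * y u <= y t.
  move=> tT t_fin; have := congr1 (fun f => f t) y_fix.
  rewrite /Etilde_op y_PrMin // /Emax_op (negbTE tT) => <-; rewrite leeD2l //.
  by apply: le_bigmax_cond; apply: strat_Act.
have y_Post t u : t \notin T -> y t < +oo -> u \in Post P t (sg t) -> y u < +oo.
  move=> tT t_fin tu; rewrite ltey; apply: (contraTneq _ t_fin) => u_oo.
  have := y_super t tT t_fin; rewrite (esum_Post_eqy _ tu u_oo) // addey // leye_eq => /eqP ->.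
  by rewrite ltxx.
apply: (value_le_supersolution sgP y_ge0 _ y_super).
apply: (reach1_on_PrMin_gt0 sgP (F := fun t => y t < +oo)) => // u v u_fin uT uv.
exact: y_Post uT u_fin uv.
Qed.

Definition value_le (sg1 sg2 : {ffun S -> A}) : bool :=
  [forall t, value sg1 t <= value sg2 t].

Lemma exists_maximal_strat : exists2 sgm, is_strat P sgm &
  forall sg, is_strat P sg -> value_le sgm sg -> value_le sg sgm.
Proof.
have [sg0 sg0P] := exists_strat.
apply: exists_maximal sg0P => [sg|sg2 sg1 sg3 /forallP le12 /forallP le23];
  apply/forallP => t; [exact: lexx | exact: le_trans (le12 t) (le23 t)].
Qed.

Section MaximalStrategy.
Variable sgm : {ffun S -> A}.
Hypothesis sgmP : is_strat P sgm.
Hypothesis sgm_max : forall sg, is_strat P sg -> value_le sgm sg -> value_le sg sgm.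

Lemma maximal_value_PrMin0 s : ~~ (0 < PrMin P T s) -> value sgm s = +oo.
Proof.
move=> PrMin0; have [sgs sgsP PrMin_s] := exists_PrMin_strat s.
have reach_s : reach sgs s = 0%R.
  apply/le_anti/andP; split; last exact: reach_ge0.
  by rewrite -lee_fin -PrMin_s leNgt.
pose Z t := reach sgs t == 0%R.
pose sg' := [ffun t => if Z t then sgs t else sgm t].
have sg'P : is_strat P sg'.
  by apply/forallP => t; rewrite ffunE; case: ifP => _; apply: strat_Act.
have value_Z t : Z t -> value sg' t = +oo.
  move=> Zt; rewrite (@value_local sg' sgs Z) //.
  - by rewrite value_reach_lt1 // (eqP Zt) ltr01.
  - by move=> u Zu; rewrite ffunE Zu.
  - by move=> u v /eqP Zu uT uv; apply/eqP; apply: reach_Post_eq0 uT Zu uv.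
have value_fin t : value sg' t < +oo -> value sgm t = value sg' t.
  apply: (@value_local sgm sg' (fun t => value sg' t < +oo)) => [u u_fin|u v u_fin uT uv].
    by rewrite ffunE; case: ifP => // /value_Z u_oo; rewrite u_oo ltxx in u_fin.
  exact: value_Post_lt_oo uv.
have /forallP/(_ s) : value_le sg' sgm.
  apply: sgm_max => //; apply/forallP => t.
  have [/value_fin -> //|oo_le] := ltP (value sg' t) +oo.
  by apply: le_trans oo_le; rewrite leey.
by rewrite value_Z /Z ?reach_s // leye_eq => /eqP.
Qed.

Lemma maximal_value_no_improvement s a : s \notin T -> a \in Act P s ->
  value sgm s < +oo ->
  (rew s)%:E + \sum_(t in Post P s a) (P s a t)%:E * value sgm t <= value sgm s.
Proof.
move=> sT aA s_fin; rewrite leNgt; apply/negP => improve.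
pose sg' := [ffun t => if t == s then a else sgm t].
have sg'P : is_strat P sg'.
  by apply/forallP => t; rewrite ffunE; case: eqP => [->|_]; last apply: strat_Act.
have agree t : (reach sgm t < 1)%R -> sg' t = sgm t.
  by rewrite ffunE; case: eqP => // ->; rewrite value_lt_oo_reach1 // ltxx.
have fin' t : value sg' t < +oo -> value sgm t \is a fin_num.
  move=> t_fin; rewrite ge0_fin_numE ?value_ge0 //; apply: contraTT t_fin.
  rewrite !value_lt_ooE // => ne1; rewrite lt_eqF //.
  by apply: (reach_lt1_switch sgmP sg'P agree); rewrite lt_neqAle ne1 reach_le1.
have le_sgm_sg' : value_le sgm sg'.
  apply/forallP; apply: (value_ge_subsolution sg'P) => [t tT|t t_fin|t tT t_fin].
  - by rewrite value_T.
  - exact: fin'.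
  - by rewrite ffunE; case: eqP => [->|_]; [apply: ltW | rewrite value_step].
have value_eq t : value sg' t = value sgm t.
  by apply/le_anti; rewrite (forallP le_sgm_sg' t) (forallP (sgm_max sg'P le_sgm_sg') t).
move: improve; rewrite -value_eq value_step // ffunE eqxx.
by under eq_bigr do rewrite value_eq; rewrite ltxx.
Qed.

Lemma maximal_value_Emax : Emax_op P T rew (value sgm) = value sgm.
Proof.
apply/funext => s; rewrite /Emax_op; case: (boolP (s \in T)) => sT.
  by rewrite value_T.
apply/le_anti/andP; split; last first.
  by rewrite [leLHS]value_step // leeD2l //; apply: le_bigmax_cond; apply: strat_Act.
have [s_fin|oo_le] := ltP (value sgm s) +oo; last by apply: le_trans oo_le; rewrite leey.
have s_fin_num : value sgm s \is a fin_num by rewrite ge0_fin_numE ?value_ge0.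
rewrite -leeBrDl //; apply: bigmax_le => [|a aA]; first by rewrite leNye.
by rewrite leeBrDl //; apply: maximal_value_no_improvement.
Qed.

Lemma maximal_value_fixpoint : Etilde_op P T rew (value sgm) = value sgm.
Proof.
apply/funext => s; rewrite /Etilde_op maximal_value_Emax.
by case: ifP => // /negbT /maximal_value_PrMin0 ->.
Qed.

Lemma EMax_maximal_value s : EMax P T rew s = value sgm s.
Proof.
apply/le_anti/andP; split; last first.
  exact: (@le_bigmax_cond _ _ _ -oo sgm (is_strat P) (fun sg => value sg s) sgmP).
apply: bigmax_le => [|sg sgP]; first by rewrite leNye.
by apply: value_le_fixpoint => //; [apply: value_ge0 | apply: maximal_value_fixpoint].
Qed.

End MaximalStrategy.

End MDP.

Theorem lemma7 (R : realType) (S A : finType) (P : S -> A -> S -> R)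
  (T : {set S}) (rew : S -> R) :
  is_mdp P -> (forall s, 0 <= rew s) ->
  is_lfp (Etilde_op P T rew) (fun s => EMax P T rew s).
Proof.
move=> mdpP rew_ge0.
have [sgm sgmP sgm_max] := @exists_maximal_strat _ _ _ P T rew mdpP.
have -> : (fun s => EMax P T rew s) = ExpRew P T rew sgm.
  by apply/funext => s; apply: EMax_maximal_value.
split.
- by move=> s; apply: value_ge0.
- exact: maximal_value_fixpoint.
- by move=> y y_ge0 y_fix s; apply: value_le_fixpoint.
Qed.
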